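(* Let $k\ge 1$ and let $F(x)=\sum_{i=1}^k\alpha_i\,\sigma\!\left(\frac{x-\mu_i}{s_i}\right)$ be the cdf of a $k$-component mixture of logistics distribution, where $\sigma(t)=1/(1+e^{-t})$, $\alpha_i>0$ with $\sum_i\alpha_i=1$, $\mu_i\in\mathbb{R}$, $s_i>0$. Then there exist parameters $\theta$ of a two-layer PNN with hidden dimension $k$ such that, writing $N^{[A,B]}_\theta$ for the normalized PNN cdf with support bounds $[A,B]$, $$\sup_{x\in[A,B]}\bigl|N^{[A,B]}_\theta(x)-F(x)\bigr|\longrightarrow 0\quad\text{as } A\to-\infty,\ B\to\infty.$$
   Context: Let $\sigma(t)=1/(1+e^{-t})$. A two-layer PNN with hidden dimension $k$ is the function $F_\theta(x)=\sum_{i=1}^k\beta_i\,\sigma(w_i x+c_i)$ of $x\in\mathbb{R}$, with parameters $\theta$ consisting of $w_i>0$, $c_i\in\mathbb{R}$, and a probability vector $(\beta_1,\dots,\beta_k)$ with all $\beta_i>0$ (in the paper the positivity constraints are enforced by reparametrizing $w_i=e^{-A_i}$, $c_i=-e^{-A_i}b_i$ and $\beta=\mathrm{softmax}(\cdot)$). Given support bounds $A<B$, the normalized PNN cdf is $N^{[A,B]}_\theta(x)=\frac{F_\theta(x)-F_\theta(A)}{F_\theta(B)-F_\theta(A)}$ for $x\in[A,B]$. *)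

From Stdlib Require Import Reals.
Open Scope R_scope.

Fixpoint sum_lt (k : nat) (f : nat -> R) : R :=
  match k with
  | O => 0
  | S n => sum_lt n f + f n
  end.

Definition sigma (t : R) : R := 1 / (1 + exp (- t)).

Definition mixF (k : nat) (alpha mu s : nat -> R) (x : R) : R :=
  sum_lt k (fun i => alpha i * sigma ((x - mu i) / s i)).

Definition pnnF (k : nat) (w c beta : nat -> R) (x : R) : R :=
  sum_lt k (fun i => beta i * sigma (w i * x + c i)).

Definition pnnN (k : nat) (w c beta : nat -> R) (A B x : R) : R :=
  (pnnF k w c beta x - pnnF k w c beta A) /
  (pnnF k w c beta B - pnnF k w c beta A).

(* The choice w_i = 1/s_i, c_i = -mu_i/s_i, beta_i = alpha_i makes F_theta equal to the
   mixture cdf F itself, so only the normalization has to be controlled.  With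
   a = F(A) and b = F(B),
     N(x) - F(x) = (F(x) (1 - b) - a (1 - F(x))) / (b - a),
   whose numerator is at most max(a, 1 - b) since 0 <= F <= 1.  Both tail masses are
   at most d once A and B lie beyond every mu_i -/+ s_i |ln d|, because
   sigma t <= e^t and 1 - sigma t <= e^(-t); then the error is at most 2d. *)

From Pilot Require Import Defs.
From Stdlib Require Import Reals Lra Lia Psatz.
Open Scope R_scope.

Lemma sum_lt_ext k f g : (forall i, f i = g i) -> sum_lt k f = sum_lt k g.
Proof. intros Hfg; induction k as [|k IH]; simpl; [easy|]; now rewrite IH, Hfg. Qed.

Lemma sum_lt_le k f g :
  (forall i, (i < k)%nat -> f i <= g i) -> sum_lt k f <= sum_lt k g.
Proof.
  induction k as [|k IH]; simpl; intros Hfg; [lra|].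
  assert (sum_lt k f <= sum_lt k g) by (apply IH; intros; apply Hfg; lia).
  assert (f k <= g k) by (apply Hfg; lia).
  lra.
Qed.

Lemma sum_lt_const0 k : sum_lt k (fun _ => 0) = 0.
Proof. induction k as [|k IH]; simpl; [easy|]; rewrite IH; ring. Qed.

Lemma sum_lt_ge0 k f : (forall i, (i < k)%nat -> 0 <= f i) -> 0 <= sum_lt k f.
Proof. intros Hf; rewrite <- (sum_lt_const0 k); now apply sum_lt_le. Qed.

Lemma sum_lt_mulr k f c : sum_lt k (fun i => f i * c) = sum_lt k f * c.
Proof. induction k as [|k IH]; simpl; [ring|]; rewrite IH; ring. Qed.

Lemma sum_lt_minus k f g : sum_lt k (fun i => f i - g i) = sum_lt k f - sum_lt k g.
Proof. induction k as [|k IH]; simpl; [ring|]; rewrite IH; ring. Qed.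

Lemma sum_lt_term_le k f j :
  (forall i, (i < k)%nat -> 0 <= f i) -> (j < k)%nat -> f j <= sum_lt k f.
Proof.
  induction k as [|k IH]; simpl; intros Hf Hj; [lia|].
  assert (0 <= sum_lt k f) by (apply sum_lt_ge0; intros; apply Hf; lia).
  assert (0 <= f k) by (apply Hf; lia).
  destruct (Nat.eq_dec j k) as [->|Hjk]; [lra|].
  assert (f j <= sum_lt k f) by (apply IH; [intros; apply Hf|]; lia).
  lra.
Qed.

Section ConvexCombination.

Variables (k : nat) (alpha : nat -> R).
Hypothesis alpha_ge0 : forall i, (i < k)%nat -> 0 <= alpha i.
Hypothesis alpha_sum1 : sum_lt k alpha = 1.

Lemma convex_le f d :
  (forall i, (i < k)%nat -> f i <= d) -> sum_lt k (fun i => alpha i * f i) <= d.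
Proof.
  intros Hf.
  rewrite <- (Rmult_1_l d), <- alpha_sum1, <- sum_lt_mulr.
  apply sum_lt_le; intros i Hi.
  specialize (Hf i Hi); specialize (alpha_ge0 i Hi); nra.
Qed.

Lemma convex_ge0 f :
  (forall i, (i < k)%nat -> 0 <= f i) -> 0 <= sum_lt k (fun i => alpha i * f i).
Proof.
  intros Hf; apply sum_lt_ge0; intros i Hi.
  apply Rmult_le_pos; auto.
Qed.

Lemma one_minus_convex f :
  1 - sum_lt k (fun i => alpha i * f i) = sum_lt k (fun i => alpha i * (1 - f i)).
Proof.
  rewrite <- alpha_sum1 at 1.
  rewrite <- sum_lt_minus.
  apply sum_lt_ext; intros i; ring.
Qed.

End ConvexCombination.

Lemma exp_le_of_le_ln t d : 0 < d -> t <= ln d -> exp t <= d.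
Proof.
  intros Hd Ht; rewrite <- (exp_ln d Hd).
  destruct (Rle_lt_or_eq_dec _ _ Ht) as [Hlt|Heq]; [|rewrite Heq; lra].
  now apply Rlt_le, exp_increasing.
Qed.

(* Qualified: [sigma] alone denotes Stdlib's finite sum from Rsigma. *)
Lemma sigma_alt t : Defs.sigma t = exp t / (exp t + 1).
Proof.
  unfold Defs.sigma; rewrite exp_Ropp.
  assert (0 < exp t) by apply exp_pos.
  field; lra.
Qed.

Lemma sigma_range t : 0 <= Defs.sigma t <= 1.
Proof.
  rewrite sigma_alt; assert (0 < exp t) by apply exp_pos.
  split.
  - apply Rlt_le, Rdiv_lt_0_compat; lra.
  - apply Rmult_le_reg_r with (exp t + 1); [lra|].
    field_simplify; lra.
Qed.

Lemma sigma_le_exp t : Defs.sigma t <= exp t.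
Proof.
  rewrite sigma_alt; assert (0 < exp t) by apply exp_pos.
  apply Rmult_le_reg_r with (exp t + 1); [lra|].
  field_simplify; nra.
Qed.

Lemma one_minus_sigma_le_exp_opp t : 1 - Defs.sigma t <= exp (- t).
Proof.
  rewrite sigma_alt, exp_Ropp; assert (0 < exp t) by apply exp_pos.
  replace (1 - exp t / (exp t + 1)) with (/ (exp t + 1)) by (field; lra).
  apply Rinv_le_contravar; lra.
Qed.

Lemma Rdiv_le_of_le_mul a b s : 0 < s -> a <= b * s -> a / s <= b.
Proof.
  intros Hs Hab; apply Rmult_le_reg_r with s; [easy|].
  unfold Rdiv; rewrite Rmult_assoc, Rinv_l; lra.
Qed.

Lemma Rle_div_of_mul_le a b s : 0 < s -> b * s <= a -> b <= a / s.
Proof.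
  intros Hs Hab; apply Rmult_le_reg_r with s; [easy|].
  unfold Rdiv; rewrite Rmult_assoc, Rinv_l; lra.
Qed.

Lemma normalized_error_le a b y d :
  0 <= a <= d -> 1 - d <= b <= 1 -> 0 <= y <= 1 -> d <= 1/4 ->
  Rabs ((y - a) / (b - a) - y) <= 2 * d.
Proof.
  intros Ha Hb Hy Hd.
  replace ((y - a) / (b - a) - y) with ((y * (1 - b) - a * (1 - y)) / (b - a))
    by (field; lra).
  assert (Hnum : Rabs (y * (1 - b) - a * (1 - y)) <= d) by (apply Rabs_le; nra).
  unfold Rdiv; rewrite Rabs_mult, Rabs_inv, (Rabs_right (b - a)) by lra.
  assert (Hinv : / (b - a) <= 2).
  { apply Rmult_le_reg_l with (b - a); [lra|]. rewrite Rinv_r; lra. }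
  pose proof (Rabs_pos (y * (1 - b) - a * (1 - y))).
  assert (0 < / (b - a)) by (apply Rinv_0_lt_compat; lra).
  nra.
Qed.

Section MixtureOfLogistics.

Variables (k : nat) (alpha mu s : nat -> R).
Hypothesis alpha_ge0 : forall i, (i < k)%nat -> 0 <= alpha i.
Hypothesis alpha_sum1 : sum_lt k alpha = 1.
Hypothesis s_gt0 : forall i, (i < k)%nat -> 0 < s i.

Lemma pnnF_logistic_params x :
  pnnF k (fun i => / s i) (fun i => - mu i / s i) alpha x = mixF k alpha mu s x.
Proof.
  apply sum_lt_ext; intros i.
  unfold Rdiv; f_equal; f_equal; ring.
Qed.

Lemma mixF_range x : 0 <= mixF k alpha mu s x <= 1.
Proof.
  split.
  - apply convex_ge0; auto; intros; apply sigma_range.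
  - apply convex_le; auto; intros; apply sigma_range.
Qed.

Definition tail_threshold (d : R) : R :=
  sum_lt k (fun i => Rabs (mu i) + s i * Rabs (ln d)).

Lemma component_le_tail_threshold d i :
  (i < k)%nat -> Rabs (mu i) + s i * Rabs (ln d) <= tail_threshold d.
Proof.
  apply (sum_lt_term_le k (fun j => Rabs (mu j) + s j * Rabs (ln d))).
  intros j Hj.
  pose proof (Rabs_pos (mu j)); pose proof (Rabs_pos (ln d)).
  pose proof (s_gt0 j Hj); nra.
Qed.

Lemma mixF_left_tail d A :
  0 < d -> A <= - tail_threshold d -> mixF k alpha mu s A <= d.
Proof.
  intros Hd HA; apply convex_le; auto; intros i Hi.
  eapply Rle_trans; [apply sigma_le_exp|].
  apply exp_le_of_le_ln; [easy|].
  pose proof (component_le_tail_threshold d i Hi).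
  pose proof (Rle_abs (- mu i)); rewrite Rabs_Ropp in *.
  pose proof (Rle_abs (- ln d)); rewrite Rabs_Ropp in *.
  pose proof (s_gt0 i Hi).
  apply Rdiv_le_of_le_mul; nra.
Qed.

Lemma mixF_right_tail d B :
  0 < d -> tail_threshold d <= B -> 1 - mixF k alpha mu s B <= d.
Proof.
  intros Hd HB; unfold mixF; rewrite one_minus_convex by easy.
  apply convex_le; auto; intros i Hi.
  eapply Rle_trans; [apply one_minus_sigma_le_exp_opp|].
  apply exp_le_of_le_ln; [easy|].
  pose proof (component_le_tail_threshold d i Hi).
  pose proof (Rle_abs (mu i)); pose proof (Rle_abs (- ln d)); rewrite Rabs_Ropp in *.
  pose proof (s_gt0 i Hi).
  assert (- ln d <= (B - mu i) / s i) by (apply Rle_div_of_mul_le; nra).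
  lra.
Qed.

End MixtureOfLogistics.

Theorem lemma4 (k : nat) (alpha mu s : nat -> R) :
  (1 <= k)%nat ->
  (forall i, (i < k)%nat -> 0 < alpha i) ->
  sum_lt k alpha = 1 ->
  (forall i, (i < k)%nat -> 0 < s i) ->
  exists w c beta : nat -> R,
    (forall i, (i < k)%nat -> 0 < w i) /\
    (forall i, (i < k)%nat -> 0 < beta i) /\
    sum_lt k beta = 1 /\
    (forall eps, 0 < eps ->
       exists M, forall A B, A <= - M -> M <= B -> A < B ->
         forall x, A <= x <= B ->
           Rabs (pnnN k w c beta A B x - mixF k alpha mu s x) <= eps).
Proof.
  intros _ Ha Hsum Hs.
  assert (Ha0 : forall i, (i < k)%nat -> 0 <= alpha i) by (intros; now apply Rlt_le, Ha).
  exists (fun i => / s i), (fun i => - mu i / s i), alpha.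
  split; [intros; now apply Rinv_0_lt_compat, Hs|].
  split; [easy|]; split; [easy|].
  intros eps Heps.
  set (d := Rmin (eps / 2) (1 / 4)).
  assert (Hd : 0 < d) by (apply Rmin_pos; lra).
  assert (Hd_eps : d <= eps / 2) by apply Rmin_l.
  assert (Hd_quarter : d <= 1 / 4) by apply Rmin_r.
  exists (tail_threshold k mu s d).
  intros A B HA HB _ x _.
  assert (Hleft := mixF_left_tail k alpha mu s Ha0 Hsum Hs d A Hd HA).
  assert (Hright := mixF_right_tail k alpha mu s Ha0 Hsum Hs d B Hd HB).
  pose proof (mixF_range k alpha mu s Ha0 Hsum A).
  pose proof (mixF_range k alpha mu s Ha0 Hsum B).
  pose proof (mixF_range k alpha mu s Ha0 Hsum x).
  unfold pnnN; rewrite !pnnF_logistic_params.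
  apply Rle_trans with (2 * d); [apply normalized_error_le; lra | lra].
Qed.
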